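(* Let $(\lambda,\mu,\mu')$ be an admissible triplet with associated weights $\mu^*,\mu'^*$. Then $(\lambda,\mu,\mu')$ is of type 0, i.e. $\langle\lambda+\mu'^*,\alpha_n^\vee\rangle=\lambda_{n-1}+\lambda_n+\mu'^*_{n-1}+\mu'^*_n\ge0$, if and only if the triplet $(\lambda,\mu'^*,\mu^* )$ is admissible.
   Context: Type $D_n$ weights are $(\lambda_1,\dots,\lambda_n)$; $\langle\lambda,\alpha_j^\vee\rangle=\lambda_j-\lambda_{j+1}$ for $j<n$ and $\langle\lambda,\alpha_n^\vee\rangle=\lambda_{n-1}+\lambda_n$; $P_+=\{\lambda_j\in\frac12\mathbb Z,\lambda_j-\lambda_k\in\mathbb Z,\lambda_1\ge\dots\ge\lambda_n,\lambda_{n-1}+\lambda_n\ge0\}$; $P[S]=\{(\pm\frac12,\dots,\pm\frac12)\}$. For $k\ge0$, $\Delta^k$ is the set of sums $\mu_1+\dots+\mu_k$ over tuples $(\mu_1,\dots,\mu_k)\in P[S]^k$ all of whose partial sums lie in $P_+$ ($\Delta^0=\{0\}$). A triplet $(\lambda,\mu,\mu')$ is admissible if $\lambda\in\Delta^k$ for some $k\ge0$, $\mu,\mu'\in P[S]$, and $\lambda+\mu,\ \lambda+\mu+\mu'\in P_+$. A free interval of the triplet is a subset $\mathrm{Fr}\subset\{1,\dots,n\}$, maximal with respect to inclusion, such that $\lambda_j$ is constant on $\mathrm{Fr}$ and $\mu_j\mu'_j<0$ for all $j\in\mathrm{Fr}$. The weights $\mu^*,\mu'^*$: outside free intervals they agree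 with $\mu,\mu'$; on each free interval $\mathrm{Fr}$, with $b$ the number of $j\in\mathrm{Fr}$ with $\mu'_j=+\frac12$, $\mu'^*_j=+\frac12$ on the $b$ smallest elements of $\mathrm{Fr}$ and $-\frac12$ on the rest, and $\mu^*_j=-\mu'^*_j$ on $\mathrm{Fr}$. *)

From HB Require Import structures.
From mathcomp Require Import all_boot all_order all_algebra.
Set Implicit Arguments. Unset Strict Implicit. Unset Printing Implicit Defensive.
Import Order.TTheory GRing.Theory Num.Theory.
Local Open Scope ring_scope.

(* A weight (lambda_1, ..., lambda_n); the paper's index j (1 <= j <= n)
   corresponds to the ordinal j-1 : 'I_n. *)
Definition weight (n : nat) := {ffun 'I_n -> rat}.

(* 1-based coordinate access: coord l j = lambda_j for 1 <= j <= n (0 otherwise). *)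
Definition coord {n : nat} (l : weight n) (j : nat) : rat :=
  if j is j'.+1 then (if insub j' is Some i then l i else 0) else 0.

Definition pair_alpha_n {n : nat} (l : weight n) : rat :=
  coord l n.-1 + coord l n.

Definition is_int (x : rat) : Prop := exists z : int, x = z%:~R.

Definition dominant {n : nat} (l : weight n) : Prop :=
  (forall j : 'I_n, is_int (2 * l j)) /\
  (forall j k : 'I_n, is_int (l j - l k)) /\
  (forall j k : 'I_n, (j <= k)%N -> l k <= l j) /\
  0 <= pair_alpha_n l.

Definition spin {n : nat} (m : weight n) : Prop :=
  forall j : 'I_n, m j = 1/2 \/ m j = - (1/2).

Definition inDelta {n : nat} (k : nat) (l : weight n) : Prop :=
  exists ms : seq (weight n),
    [/\ size ms = k,
        (forall m, m \in ms -> spin m),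
        (forall i, (1 <= i <= k)%N -> dominant (\sum_(m <- take i ms) m))
      & l = \sum_(m <- ms) m].

Definition admissible {n : nat} (l m m' : weight n) : Prop :=
  [/\ exists k, inDelta k l, spin m, spin m', dominant (l + m) & dominant (l + m + m')].

Definition free_prop {n : nat} (l m m' : weight n) (F : {set 'I_n}) : bool :=
  [forall j in F, forall k in F, l j == l k] && [forall j in F, m j * m' j < 0].

Definition free_interval {n : nat} (l m m' : weight n) (F : {set 'I_n}) : bool :=
  maxset (free_prop l m m') F.

Definition mu'star {n : nat} (l m m' : weight n) : weight n :=
  [ffun j => match [pick F | free_interval l m m' F & j \in F] with
             | Some F =>
                 if (#|[set k in F | (k < j)%N]| < #|[set k in F | m' k == 1/2]|)%N
                 then 1/2 else - (1/2)
             | None => m' j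
             end].

Definition mustar {n : nat} (l m m' : weight n) : weight n :=
  [ffun j => match [pick F | free_interval l m m' F & j \in F] with
             | Some _ => - mu'star l m m' j
             | None => m j
             end].

From Pilot Require Import Defs.
From mathcomp Require Import all_boot all_order all_algebra.
From mathcomp Require Import ring lra.
Set Implicit Arguments. Unset Strict Implicit. Unset Printing Implicit Defensive.
Import Order.TTheory GRing.Theory Num.Theory.
Local Open Scope ring_scope.

(* Only dominance of [l + mu'^*] is at stake: [mu'^* + mu^* = mu + mu'], so the
   second dominance condition is inherited, and [mu'^* - mu] is integral, so the
   integrality conditions are inherited from [l + mu].  Monotonicity of [l + mu'^*]
   follows from that of [l + mu] and [l + mu + mu'] because [mu'^*] only reorders
   the signs of [mu'] inside each free interval (putting the [+1/2] first), while
   outside free intervals [mu = mu'].  What remains is exactly the type-0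
   inequality [<l + mu'^*, alpha_n^vee> >= 0]. *)

Definition pm_half (x : rat) : Prop := x = 1/2 \/ x = - (1/2).

Lemma pm_half_mul_lt0 x y : pm_half x -> pm_half y -> x * y < 0 -> x = - y.
Proof. by move=> [->|->] [->|->]; lra. Qed.

Lemma pm_half_mul_ge0 x y : pm_half x -> pm_half y -> 0 <= x * y -> x = y.
Proof. by move=> [->|->] [->|->]; lra. Qed.

Lemma is_intD x y : is_int x -> is_int y -> is_int (x + y).
Proof. by move=> [a ->] [b ->]; exists (a + b); rewrite intrD. Qed.

Lemma is_int_pm_halfB x y : pm_half x -> pm_half y -> is_int (x - y).
Proof.
by move=> [->|->] [->|->]; [exists 0 | exists 1 | exists (-1) | exists 0]; apply/eqP.
Qed.

Lemma is_int_gt0_ge1 x : is_int x -> 0 < x -> 1 <= x.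
Proof. by move=> [z ->]; rewrite ltr0z ler1z. Qed.

Lemma weightDE n (f g : weight n) j : (f + g) j = f j + g j.
Proof. by rewrite ffunE. Qed.

Lemma dominant_le n (l : weight n) (j k : 'I_n) :
  dominant l -> (j <= k)%N -> l k <= l j.
Proof. by case=> _ [_ [mono _]]; apply: mono. Qed.

Lemma coord_weight0 n j : Defs.coord (0 : weight n) j = 0.
Proof. by case: j => [|j] //=; case: insub => [i|]; rewrite ?ffunE. Qed.

Lemma dominant0 n : dominant (0 : weight n).
Proof.
split; [|split; [|split]] => [j|j k|j k _|]; rewrite ?ffunE.
- by exists 0; rewrite mulr0.
- by exists 0; rewrite subrr.
- by [].
- by rewrite /pair_alpha_n !coord_weight0 addr0.
Qed.

Lemma inDelta_dominant n k (l : weight n) : inDelta k l -> dominant l.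
Proof.
case=> ms [<- _ dom_prefix ->]; case: ms dom_prefix => [|m ms] dom_prefix.
  by rewrite big_nil; apply: dominant0.
by rewrite -(take_size (m :: ms)); apply: dom_prefix; rewrite leqnn.
Qed.

Lemma dominant_spin_change n (l m1 m2 : weight n) :
  spin m1 -> spin m2 -> dominant (l + m1) ->
  (forall j k : 'I_n, (j <= k)%N -> (l + m2) k <= (l + m2) j) ->
  0 <= pair_alpha_n (l + m2) -> dominant (l + m2).
Proof.
move=> sp1 sp2 [int2 [int_diff _]] mono pair_ge0.
split; [|split; [|split]] => // [j|j k]; rewrite !weightDE.
- have := int2 j; rewrite weightDE => int_lm1.
  have d := is_int_pm_halfB (sp2 j) (sp1 j).
  have -> : 2 * (l j + m2 j) = 2 * (l j + m1 j) + ((m2 j - m1 j) + (m2 j - m1 j))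
    by ring.
  by apply: is_intD => //; apply: is_intD.
- have := int_diff j k; rewrite !weightDE => int_lm1.
  have dj := is_int_pm_halfB (sp2 j) (sp1 j).
  have dk := is_int_pm_halfB (sp1 k) (sp2 k).
  have -> : l j + m2 j - (l k + m2 k)
    = (l j + m1 j - (l k + m1 k)) + ((m2 j - m1 j) + (m1 k - m2 k)) by ring.
  by apply: is_intD => //; apply: is_intD.
Qed.

Section FreeIntervals.

Variables (n : nat) (l m m' : weight n).

Lemma free_propP (F : {set 'I_n}) :
  reflect ((forall j k, j \in F -> k \in F -> l j = l k) /\
           (forall j, j \in F -> m j * m' j < 0)) (free_prop l m m' F).
Proof.
apply: (iffP andP) => [[/forall_inP lF /forall_inP negF]|[lF negF]]; split.
- by move=> j k jF kF; apply/eqP/(forall_inP (lF j jF)).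
- exact: negF.
- by apply/forall_inP => j jF; apply/forall_inP => k kF; apply/eqP/lF.
- exact/forall_inP.
Qed.

Lemma free_interval_mul_lt0 F j :
  free_interval l m m' F -> j \in F -> m j * m' j < 0.
Proof. by move=> /maxsetp /free_propP [_]; apply. Qed.

Lemma free_propU A B a b :
  free_prop l m m' A -> free_prop l m m' B -> a \in A -> b \in B -> l a = l b ->
  free_prop l m m' (A :|: B).
Proof.
move=> /free_propP[lA negA] /free_propP[lB negB] aA bB lab.
apply/free_propP; split=> [j k|j]; rewrite !inE.
- case/orP=> [jA|jB] /orP[kA|kB].
  + exact: lA.
  + by rewrite (lA j a) // lab; apply: lB.
  + by rewrite (lB j b) // -lab; apply: lA.
  + exact: lB.
- by case/orP; [apply: negA | apply: negB].
Qed.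

Lemma free_interval_eq A B a b :
  free_interval l m m' A -> free_interval l m m' B ->
  a \in A -> b \in B -> l a = l b -> A = B.
Proof.
move=> maxA maxB aA bB lab.
have freeAB := free_propU (maxsetp maxA) (maxsetp maxB) aA bB lab.
rewrite -[LHS](maxsetsup maxA freeAB (subsetUl A B)).
exact: (maxsetsup maxB freeAB (subsetUr A B)).
Qed.

Lemma exists_free_interval j :
  m j * m' j < 0 -> exists2 F, free_interval l m m' F & j \in F.
Proof.
move=> neg_j.
have free_j : free_prop l m m' [set j].
  by apply/free_propP; split=> [a b|a]; rewrite !inE => /eqP-> //; move/eqP->.
have [F maxF sub_jF] := maxset_exists free_j.
by exists F => //; apply: (subsetP sub_jF); rewrite inE.
Qed.

Lemma mu'star_in F j : free_interval l m m' F -> j \in F ->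
  mu'star l m m' j =
  if (#|[set k in F | (k < j)%N]| < #|[set k in F | m' k == 1/2]|)%N
  then 1/2 else - (1/2).
Proof.
move=> maxF jF; rewrite ffunE; case: pickP => [G /andP[maxG jG]|none].
  by rewrite (free_interval_eq maxG maxF jG jF).
by have := none F; rewrite maxF jF.
Qed.

Lemma mu'star_out j : 0 <= m j * m' j -> mu'star l m m' j = m' j.
Proof.
rewrite ffunE; case: pickP => [F /andP[maxF jF]|//].
by rewrite leNgt (free_interval_mul_lt0 maxF jF).
Qed.

Lemma mustar_in F j : free_interval l m m' F -> j \in F ->
  mustar l m m' j = - mu'star l m m' j.
Proof.
move=> maxF jF; rewrite [LHS]ffunE; case: pickP => // none.
by have := none F; rewrite maxF jF.
Qed.

Lemma mustar_out j : 0 <= m j * m' j -> mustar l m m' j = m j.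
Proof.
rewrite ffunE; case: pickP => [F /andP[maxF jF]|//].
by rewrite leNgt (free_interval_mul_lt0 maxF jF).
Qed.

Lemma spin_mu'star : spin m' -> spin (mu'star l m m').
Proof.
move=> sp' j; rewrite ffunE; case: pickP => [F _|_]; last exact: sp'.
by case: ifP => _; [left|right].
Qed.

Lemma spin_mustar : spin m -> spin m' -> spin (mustar l m m').
Proof.
move=> sp sp' j; rewrite ffunE; case: pickP => [F _|_]; last exact: sp.
by case: (spin_mu'star sp' j) => ->; [right|left]; rewrite ?opprK.
Qed.

Lemma mu'star_add_mustar :
  spin m -> spin m' -> mu'star l m m' + mustar l m m' = m + m'.
Proof.
move=> sp sp'; apply/ffunP => j; rewrite !weightDE.
case: (ltP (m j * m' j) 0) => [neg_j|nneg_j].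
  have [F maxF jF] := exists_free_interval neg_j.
  by rewrite (mustar_in maxF jF) (pm_half_mul_lt0 (sp j) (sp' j) neg_j) subrr addNr.
by rewrite mu'star_out // mustar_out // addrC.
Qed.

Lemma mu'star_free_interval_mono F (j k : 'I_n) :
  free_interval l m m' F -> j \in F -> k \in F -> (j <= k)%N ->
  mu'star l m m' k <= mu'star l m m' j.
Proof.
move=> maxF jF kF jk; rewrite !(mu'star_in maxF) //.
set c := #|[set x in F | m' x == 1/2]|.
have lt_k_j : (#|[set x in F | (x < k)%N]| < c)%N ->
              (#|[set x in F | (x < j)%N]| < c)%N.
  apply: leq_ltn_trans; apply/subset_leq_card/subsetP => x.
  by rewrite !inE => /andP[-> xj]; apply: leq_trans xj jk.
by case: ifP => [/lt_k_j -> | _]; [|case: ifP]; lra.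
Qed.

Lemma mu'star_level_mono (j k : 'I_n) :
  spin m -> spin m' -> (j <= k)%N -> l j = l k ->
  m k <= m j -> m k + m' k <= m j + m' j ->
  mu'star l m m' k <= mu'star l m m' j.
Proof.
move=> sp sp' jk ljk mkj mm'kj.
move: (sp j) (sp' j) (sp k) (sp' k) => spj spj' spk spk'.
have [sj sk] := (spin_mu'star sp' j, spin_mu'star sp' k).
case: (ltP (m j * m' j) 0) => [neg_j|nneg_j];
  case: (ltP (m k * m' k) 0) => [neg_k|nneg_k].
- have [F maxF jF] := exists_free_interval neg_j.
  have [G maxG kG] := exists_free_interval neg_k.
  have eqFG := free_interval_eq maxF maxG jF kG ljk.
  rewrite -{}eqFG in kG.
  exact: mu'star_free_interval_mono maxF jF kG jk.
- have mj := pm_half_mul_lt0 spj spj' neg_j.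
  have mk := pm_half_mul_ge0 spk spk' nneg_k.
  rewrite (mu'star_out nneg_k).
  by case: sj => ->; case: spj => ?; case: spj' => ?; case: spk' => ?; lra.
- have mj := pm_half_mul_ge0 spj spj' nneg_j.
  have mk := pm_half_mul_lt0 spk spk' neg_k.
  rewrite (mu'star_out nneg_j).
  by case: sk => ->; case: spj' => ?; case: spk => ?; case: spk' => ?; lra.
- have mj := pm_half_mul_ge0 spj spj' nneg_j.
  have mk := pm_half_mul_ge0 spk spk' nneg_k.
  by rewrite !mu'star_out //; lra.
Qed.

End FreeIntervals.

Lemma admissible_mu'star_mono n (l m m' : weight n) (j k : 'I_n) :
  admissible l m m' -> (j <= k)%N ->
  (l + mu'star l m m') k <= (l + mu'star l m m') j.
Proof.
case=> [[kk /inDelta_dominant dom_l] sp sp' dom_lm dom_lmm'] jk.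
rewrite !weightDE.
have lkj := dominant_le dom_l jk.
have := dominant_le dom_lm jk; have := dominant_le dom_lmm' jk.
rewrite !weightDE => lmm'kj lmkj.
have int_ljk : is_int (l j - l k).
  have [_ [int_diff _]] := dom_lm; have := int_diff j k; rewrite !weightDE => ?.
  have -> : l j - l k = (l j + m j - (l k + m k)) + (m k - m j) by ring.
  by apply: is_intD => //; apply: is_int_pm_halfB.
have [ljk|ljk] := eqVneq (l j) (l k).
  by rewrite ljk lerD2l; apply: mu'star_level_mono => //; lra.
have : 1 <= l j - l k.
  by apply: is_int_gt0_ge1; rewrite // subr_gt0 lt_neqAle eq_sym ljk lkj.
have [sj sk] := (spin_mu'star l m sp' j, spin_mu'star l m sp' k).
by case: sj => ->; case: sk => ->; lra.
Qed.

Theorem corollary6p1 (n : nat) (hn : (2 <= n)%N) (l m m' : weight n) :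
  admissible l m m' ->
  (0 <= pair_alpha_n (l + mu'star l m m')
   <-> admissible l (mu'star l m m') (mustar l m m')).
Proof.
move=> adm; have [inD sp sp' dom_lm dom_lmm'] := adm.
split; last by case=> _ _ _ [_ [_ [_ pair_ge0]]].
move=> pair_ge0; split=> //.
- exact: spin_mu'star.
- exact: spin_mustar.
- apply: (dominant_spin_change sp (spin_mu'star l m sp') dom_lm _ pair_ge0).
  by move=> j k; apply: admissible_mu'star_mono.
- by rewrite -addrA mu'star_add_mustar // addrA.
Qed.
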